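(* Let $\mathcal{C}$ be an $(n,k,d)$ linear MDS code over a finite field $\mathbb{F}_q$ with $d \ge 3$. Then $$\rho(\mathcal{C}) \ge \left\lfloor \frac{1}{d-1}\binom{n}{d-2}\right\rfloor + 1.$$
   Context: An $(n,k,d)$ linear MDS code is a linear code over $\mathbb{F}_q$ of length $n$, dimension $k$ and minimum Hamming distance $d = n-k+1$. A parity-check matrix for $\mathcal{C}$ is any matrix (possibly with linearly dependent rows) whose rows span $\mathcal{C}^\perp$. For a parity-check matrix $H$, the stopping distance $s(H)$ is the largest integer such that for every set of $s(H)-1$ or fewer columns of $H$, the projection of $H$ onto those columns contains at least one row with exactly one nonzero entry. The stopping redundancy $\rho(\mathcal{C})$ is the smallest number of rows of a parity-check matrix $H$ for $\mathcal{C}$ with $s(H) = d$. *)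

From HB Require Import structures.
From mathcomp Require Import all_boot all_order all_algebra all_field.
Set Implicit Arguments. Unset Strict Implicit. Unset Printing Implicit Defensive.
Import GRing.Theory.
Local Open Scope ring_scope.

(* A linear code of length n over a finite field F is represented as the row
   space of a matrix G : 'M[F]_(m, n) (a generator matrix, rows possibly
   dependent). *)

Definition codeword (F : fieldType) (m n : nat) (G : 'M[F]_(m, n)) (v : 'rV[F]_n) : bool :=
  (v <= G)%MS.

Definition wt (F : fieldType) (n : nat) (v : 'rV[F]_n) : nat :=
  #|[set i : 'I_n | v 0 i != 0]|.

Definition min_distance (F : fieldType) (m n : nat) (G : 'M[F]_(m, n)) (d : nat) : Prop :=
  (exists2 v, codeword G v & (v != 0) && (wt v == d)) /\
  (forall v, codeword G v -> v != 0 -> (d <= wt v)%N).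

Definition MDS_code (F : fieldType) (m n : nat) (G : 'M[F]_(m, n)) (k d : nat) : Prop :=
  \rank G = k /\ min_distance G d /\ d = (n - k + 1)%N.

Definition in_dual (F : fieldType) (m n : nat) (G : 'M[F]_(m, n)) (v : 'rV[F]_n) : Prop :=
  forall c, codeword G c -> (c *m v^T) = 0.

Definition parity_check (F : fieldType) (m n r : nat) (G : 'M[F]_(m, n)) (H : 'M[F]_(r, n)) : Prop :=
  forall v : 'rV[F]_n, (v <= H)%MS <-> in_dual G v.

Definition row_single (F : fieldType) (r n : nat) (H : 'M[F]_(r, n)) (S : {set 'I_n}) (j : 'I_r) : bool :=
  #|[set i in S | H j i != 0]| == 1%N.

Definition covers_upto (F : fieldType) (r n : nat) (H : 'M[F]_(r, n)) (t : nat) : Prop :=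
  forall S : {set 'I_n}, S != set0 -> (#|S| <= t)%N -> exists j, row_single H S j.

Definition stopping_distance (F : fieldType) (r n : nat) (H : 'M[F]_(r, n)) (s : nat) : Prop :=
  covers_upto H s.-1 /\ ~ covers_upto H s.

From HB Require Import structures.
From mathcomp Require Import all_boot all_order all_algebra all_field.
From mathcomp Require Import zify.
Set Implicit Arguments. Unset Strict Implicit. Unset Printing Implicit Defensive.
Import GRing.Theory.

(* The dual of an MDS code of length n and dimension k has minimum distance k + 1, so every
   nonzero row of a parity-check matrix vanishes on at most d - 2 coordinates.  Such a row
   has exactly one nonzero entry on a set of d - 1 columns only if that set is its zero set
   plus one column; hence each row serves at most n - d + 2 of the 'C(n, d - 1) column sets
   of size d - 1, and r (n - d + 2) >= 'C(n, d - 1) = 'C(n, d - 2) (n - d + 2) / (d - 1).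
   Equality is impossible: the zero set Z of a row serving some (d - 1)-set is itself served
   by a row h; either h serves no (d - 1)-set at all, or Z together with the zero set of h is
   a (d - 1)-set served by two rows. *)

Lemma ltn_sum (I : eqType) (s : seq I) (P : pred I) (E1 E2 : I -> nat) :
  (forall i, P i -> E1 i <= E2 i) -> (exists2 i, i \in s & P i && (E1 i < E2 i)) ->
  \sum_(i <- s | P i) E1 i < \sum_(i <- s | P i) E2 i.
Proof.
move=> le12 [i + /andP[Pi lt12]]; elim: s => // a s IHs.
rewrite !big_cons inE => /predU1P[<- | i_s].
  by rewrite Pi -addSn leq_add // leq_sum.
by case: ifP => Pa; rewrite ?(IHs i_s) // -addnS leq_add ?le12 ?IHs.
Qed.

Lemma exists_card_between (T : finType) (A B : {set T}) m :
  A \subset B -> #|A| <= m <= #|B| ->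
  exists X : {set T}, [/\ A \subset X, X \subset B & #|X| = m].
Proof.
move=> sAB /andP[leAm lemB]; rewrite -(subnKC leAm) in lemB *.
elim: (m - #|A|) lemB => [|t IHt] leB; first by exists A; rewrite addn0.
have [|X [sAX sXB cardX]] := IHt; first by rewrite (leq_trans _ leB) ?leq_add2l.
have /set0Pn[x] : B :\: X != set0.
  by rewrite setD_eq0; apply: contraTN leB => /subset_leq_card; rewrite addnS -cardX -ltnNge.
rewrite inE => /andP[xX xB].
exists (x |: X); split; first exact: subset_trans sAX (subsetUr _ _).
  by rewrite subUset sub1set xB.
by rewrite cardsU1 xX cardX addnS.
Qed.

Lemma bin_div_ltn n t r :
  t < n -> 'C(n, t.+1) < r * (n - t) -> 'C(n, t) %/ t.+1 < r.
Proof.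
move=> lt_tn ltC; rewrite ltn_divLR // -(ltn_pmul2l (_ : 0 < n - t)) ?subn_gt0 //.
by rewrite -mul_bin_left [X in _ < X]mulnC mulnAC [X in _ < X]mulnC ltn_pmul2l.
Qed.

Section MeetOnce.
Variable T : finType.

Lemma meet1_shape (A S : {set T}) t :
  #|~: A| <= t -> #|S| = t.+1 -> #|S :&: A| = 1 ->
  #|~: A| = t /\ exists2 x, x \in A & S = x |: ~: A.
Proof.
move=> leAt cardS /eqP/cards1P[x SAx].
have cardSA : #|S :\: A| = t by have := cardsID A S; rewrite SAx cards1 cardS; lia.
have eqSA : S :\: A = ~: A.
  by apply/eqP; rewrite eqEcard setDE subsetIr -setDE cardSA.
split; first by rewrite -eqSA.
exists x; first by move: (set11 x); rewrite -SAx inE => /andP[].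
by rewrite -eqSA -{1}(setID S A) SAx.
Qed.

Lemma card_meet1_le (A : {set T}) t :
  (A != set0 -> #|~: A| <= t) ->
  #|[set S : {set T} | (#|S| == t.+1) && (#|S :&: A| == 1)]| <= (#|~: A| == t) * #|A|.
Proof.
move=> leAt; have [-> | A0] := eqVneq A set0.
  rewrite cards0 muln0 leqn0 cards_eq0; apply/eqP/setP => S.
  by rewrite !inE setI0 cards0 andbF.
have [eqAt | neAt] := eqVneq #|~: A| t; rewrite ?mul1n ?mul0n.
  apply: leq_trans (leq_imset_card (fun x => x |: ~: A) A).
  apply/subset_leq_card/subsetP => S; rewrite inE => /andP[/eqP cardS /eqP cardSA].
  have [_ [x xA ->]] := meet1_shape (leAt A0) cardS cardSA.
  by apply/imsetP; exists x.
rewrite leqn0 cards_eq0; apply/eqP/setP => S; rewrite !inE.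
apply/negbTE/andP => -[/eqP cardS /eqP cardSA].
by have [/eqP] := meet1_shape (leAt A0) cardS cardSA; rewrite (negbTE neAt).
Qed.

Lemma meet1_twice (A B : {set T}) t :
  #|~: A| = t -> #|~: B| = t -> #|~: A :&: B| = 1 ->
  [/\ #|~: A :|: ~: B| = t.+1, #|(~: A :|: ~: B) :&: A| = 1
    & #|(~: A :|: ~: B) :&: B| = 1].
Proof.
move=> cardA cardB cardAB.
have cardBA : #|~: B :&: A| = 1.
  have := cardsID (~: B) (~: A); have := cardsID (~: A) (~: B).
  rewrite !setDE !setCK setIC; lia.
rewrite !setIUl [~: A :&: A]setIC [~: B :&: B]setIC !setICr set0U setU0 cardAB cardBA.
split => //; have := cardsUI (~: A) (~: B); have := cardsID (~: B) (~: A).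
rewrite setDE setCK; lia.
Qed.

Section MeetOnceCover.
Variables (r t : nat) (A : 'I_r -> {set T}).
Hypothesis card_compl_le : forall j, A j != set0 -> #|~: A j| <= t.
Hypothesis meet1_cover :
  forall S : {set T}, S != set0 -> #|S| <= t.+1 -> exists j, #|S :&: A j| == 1.
Hypotheses (t_gt0 : 0 < t) (t_lt_card : t < #|T|).

Let meets1 (S : {set T}) j : bool := #|S :&: A j| == 1.

Lemma meet1_twice_or_defect :
  (exists2 S : {set T}, #|S| == t.+1 & 1 < \sum_j meets1 S j) \/ exists j, #|~: A j| != t.
Proof.
have /(exists_card_between (sub0set [set: T]))[S0 [_ _ cardS0]] :
    #|@set0 T| <= t.+1 <= #|[set: T]|.
  by rewrite cards0 cardsT.
have [|| j0 S0j0] := meet1_cover (S := S0); rewrite ?cardS0 //.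
  by rewrite -card_gt0 cardS0.
have A0 : A j0 != set0 by apply: contraTneq S0j0 => ->; rewrite setI0 cards0.
have [cardA0 _] := meet1_shape (card_compl_le A0) cardS0 (eqP S0j0).
have [|| h A0h] := meet1_cover (S := ~: A j0); rewrite ?cardA0 //.
  by rewrite -card_gt0 cardA0.
have [cardAh | ] := eqVneq #|~: A h| t; [left | by right; exists h].
have [cardS Sj0 Sh] := meet1_twice cardA0 cardAh (eqP A0h).
exists (~: A j0 :|: ~: A h); first by rewrite cardS.
have hj0 : h != j0 by apply: contraTneq A0h => ->; rewrite setIC setICr cards0.
by rewrite (bigD1 j0) // (bigD1 h) //= /meets1 Sj0 Sh.
Qed.

Lemma bin_lt_meet1_cover : 'C(#|T|, t.+1) < r * (#|T| - t).
Proof.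
pose cover j := [set S : {set T} | (#|S| == t.+1) && meets1 S j].
have double_count :
    \sum_(S : {set T} | #|S| == t.+1) \sum_j meets1 S j = \sum_j #|cover j|.
  rewrite exchange_big; apply: eq_bigr => j _.
  by rewrite -sum1dep_card big_mkcondr; apply: eq_bigr => S _; case: (meets1 S j).
have card_cover j : #|cover j| <= (#|~: A j| == t) * (#|T| - t).
  apply: leq_trans (card_meet1_le (@card_compl_le j)) _.
  by have [<-|] := eqVneq; rewrite ?mul0n // !mul1n -(cardsC (A j)) addnK.
have card_cover_le j : #|cover j| <= #|T| - t.
  by apply: leq_trans (card_cover j) _; case: (_ == _); rewrite ?mul1n ?mul0n.
have meets1_pos (S : {set T}) : #|S| == t.+1 -> 0 < \sum_j meets1 S j.
  move=> /eqP cardS; have [||j Sj] := meet1_cover (S := S); rewrite ?cardS //.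
    by rewrite -card_gt0 cardS.
  by rewrite (bigD1 j) //= /meets1 Sj.
rewrite -card_draws -sum1dep_card.
have -> : r * (#|T| - t) = \sum_(j < r) (#|T| - t) by rewrite sum_nat_const card_ord.
have [[S0 cardS0 twice] | [j0 defect]] := meet1_twice_or_defect.
- apply: (@leq_trans (\sum_j #|cover j|)); last by apply: leq_sum => j _.
  rewrite -double_count; apply: ltn_sum => [S /meets1_pos // |].
  by exists S0; rewrite ?mem_index_enum // cardS0.
- apply: (@leq_ltn_trans (\sum_j #|cover j|)).
    by rewrite -double_count; apply: leq_sum => S /meets1_pos.
  apply: ltn_sum => [j _ | ]; first exact: card_cover_le.
  exists j0; rewrite ?mem_index_enum //=.
  by apply: leq_ltn_trans (card_cover j0) _; rewrite (negbTE defect) mul0n subn_gt0.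
Qed.

End MeetOnceCover.

End MeetOnce.

Local Open Scope ring_scope.

Lemma exists_submx_vanishing (F : fieldType) p n (V : 'M[F]_(p, n)) (X : {set 'I_n}) :
  (#|X| < \rank V)%N ->
  exists2 c : 'rV[F]_n, (c <= V)%MS & (c != 0) /\ {in X, forall i, c 0 i = 0}.
Proof.
(* [c *m P] lists the entries of [c] indexed by [X]. *)
move=> ltXV; pose P : 'M[F]_(n, #|X|) := colsub enum_val 1%:M.
have : (V :&: kermx P)%MS != 0.
  rewrite -mxrank_eq0; have := mxrank_mul_ker V P; have := rank_leq_col (V *m P); lia.
case/rowV0Pn => c; rewrite sub_capmx sub_kermx => /andP[cV cP0] c0.
exists c => //; split => // i iX; move/eqP/matrixP: cP0 => /(_ 0 (enum_rank_in iX i)).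
by rewrite mulmx_colsub mulmx1 !mxE enum_rankK_in.
Qed.

Lemma wt_vanishing_le (F : fieldType) n (c : 'rV[F]_n) (Z : {set 'I_n}) :
  {in Z, forall i, c 0 i = 0} -> (wt c <= n - #|Z|)%N.
Proof.
move=> cZ; have : [set i | c 0 i != 0] \subset ~: Z.
  by apply/subsetP => i; rewrite !inE; apply: contra => /cZ ->.
move/subset_leq_card; have := cardsC Z; rewrite card_ord => cardZ.
by rewrite -[X in (X - _)%N]cardZ addKn.
Qed.

Lemma dual_wt_gt (F : fieldType) m n (G : 'M[F]_(m, n)) (k : nat) :
  \rank G = k -> (forall c, codeword G c -> c != 0 -> (n - k < wt c)%N) ->
  forall v, in_dual G v -> v != 0 -> (k < wt v)%N.
Proof.
move=> rkG wtG v vG v0; rewrite ltnNge; apply/negP => wtv.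
have [i0 vi0] : exists i, v 0 i != 0.
  apply/existsP; apply: contraNT v0 => /existsPn v_0.
  by apply/eqP/rowP => i; rewrite mxE; apply/eqP/negPn.
set U := [set i | v 0 i != 0]; have cardU : wt v = #|U| by [].
have Ui0 : i0 \in U by rewrite inE.
have cardUi0 : #|U :\ i0| = (#|U|).-1 by rewrite [in RHS](cardsD1 i0 U) Ui0.
have U_gt0 : (0 < #|U|)%N by rewrite card_gt0; apply/set0Pn; exists i0.
have kn : (k <= n)%N by rewrite -rkG rank_leq_col.
have sUi0 : U :\ i0 \subset [set~ i0] by apply/subsetP => i; rewrite !inE => /andP[].
have /(exists_card_between sUi0)[X [sUX sXi0 cardX]] :
    (#|U :\ i0| <= k.-1 <= #|[set~ i0]|)%N.
  by rewrite cardsC1 card_ord cardUi0 -cardU; lia.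
have /exists_submx_vanishing[c cG [c0 cX]] : (#|X| < \rank G)%N.
  by rewrite rkG cardX; lia.
have ci0 : c 0 i0 = 0.
  move/matrixP/(_ 0 0): (vG c cG); rewrite !mxE (bigD1 i0) //= big1 => [|i ii0].
    by rewrite addr0 !mxE => /eqP; rewrite mulf_eq0 (negbTE vi0) orbF => /eqP.
  rewrite !mxE; have [->|vi] := eqVneq (v 0 i) 0; first by rewrite mulr0.
  by rewrite cX ?mul0r // (subsetP sUX) // !inE ii0.
have i0X : i0 \notin X by apply/negP => /(subsetP sXi0); rewrite !inE eqxx.
have /wt_vanishing_le : {in i0 |: X, forall i, c 0 i = 0}.
  by move=> i; rewrite !inE => /predU1P[-> | /cX].
rewrite cardsU1 i0X cardX; have := wtG c cG c0; lia.
Qed.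

Definition row_supp (F : fieldType) r n (H : 'M[F]_(r, n)) (j : 'I_r) : {set 'I_n} :=
  [set i | H j i != 0].

Lemma row_singleE (F : fieldType) r n (H : 'M[F]_(r, n)) S j :
  row_single H S j = (#|S :&: row_supp H j| == 1)%N.
Proof. by rewrite /row_single; congr (_ == _); apply: eq_card => i; rewrite !inE. Qed.

Lemma parity_check_row_supp (F : fieldType) m n r (G : 'M[F]_(m, n)) (H : 'M[F]_(r, n)) (k : nat) j :
  \rank G = k -> (forall c, codeword G c -> c != 0 -> (n - k < wt c)%N) ->
  parity_check G H -> row_supp H j != set0 -> (k < #|row_supp H j|)%N.
Proof.
move=> rkG wtG dualH /set0Pn[i]; rewrite inE => Hji.
have -> : #|row_supp H j| = wt (row j H) by apply: eq_card => l; rewrite !inE mxE.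
apply: (dual_wt_gt rkG wtG); first exact/dualH/row_sub.
by apply: contraTneq Hji => /rowP/(_ i); rewrite !mxE => ->; rewrite eqxx.
Qed.

Theorem theorem17 (F : finFieldType) (m n k d : nat) (G : 'M[F]_(m, n)) :
  MDS_code G k d -> (3 <= d)%N ->
  forall (r : nat) (H : 'M[F]_(r, n)),
    parity_check G H -> stopping_distance H d ->
    ('C(n, d - 2) %/ (d - 1) + 1 <= r)%N.
Proof.
move=> [rkG [[[v _ /andP[_ /eqP wt_v]] wtG] dE]] d3 r H dualH [coverH _].
have le_dn : (d <= n)%N by rewrite -wt_v -[n in (_ <= n)%N]card_ord max_card.
have wtG_gt c : codeword G c -> c != 0 -> (n - k < wt c)%N.
  by move=> cG c_neq0; have := wtG c cG c_neq0; lia.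
have ed : (d - 1 = (d - 2).+1)%N by lia.
rewrite addn1 ed; apply: bin_div_ltn; first by lia.
rewrite -[n](card_ord n); apply: (@bin_lt_meet1_cover _ _ _ (row_supp H)).
- move=> j /(parity_check_row_supp rkG wtG_gt dualH).
  by have := cardsC (row_supp H j); rewrite card_ord; lia.
- move=> S S0 cardS; have [|j] := coverH S S0; first by lia.
  by rewrite row_singleE; exists j.
- by lia.
- by rewrite card_ord; lia.
Qed.
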